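(* Let $P\in\mathcal X$ be positive definite and let $Z_n$, $n=1,2,\dots$, be a sequence of traceless Hermitian matrices in $\mathbb H^d$ such that $F(P,Z_n)$ is constant in $n$. Then the eigenvalues $\{z_{k,n}\}_{k=1,\dots,d}$ of $Z_n$ are uniformly bounded: $\sup_{k,n}|z_{k,n}|<\infty$.
   Context: Single player: $d\ge1$, $\mathbb H^d$ is the real vector space of $d\times d$ complex Hermitian matrices; $\mathcal X=\{X\in\mathbb H^d:X\succeq0,\operatorname{tr}X=1\}$. For Hermitian $A=\sum_k\lambda_kv_kv_k^\dagger$, $f(A)=\sum_kf(\lambda_k)v_kv_k^\dagger$. Regularizer $h(X)=\operatorname{tr}\theta(X)$ with $\theta:[0,1]\to\mathbb R$ continuous, twice differentiable on $(0,1]$, $\theta(0)=0$, $\inf_{(0,1]}\theta''>0$. Mirror map $Q(Y)=\arg\max_{X\in\mathcal X}\{\operatorname{tr}(YX)-h(X)\}$. Convex conjugate $h^*(Y)=\max_{X\in\mathcal X}\{\operatorname{tr}(YX)-h(X)\}$. Fenchel coupling $F(P,Y)=h(P)+h^*(Y)-\operatorname{tr}(PY)$ for $P\in\mathcal X$, $Y\in\mathbb H^d$. *)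

From HB Require Import structures.
From mathcomp Require Import all_boot all_order all_algebra.
From mathcomp Require Import sesquilinear spectral.
From mathcomp Require Import complex.
From mathcomp Require Import all_classical all_reals all_analysis.
Set Implicit Arguments. Unset Strict Implicit. Unset Printing Implicit Defensive.
Import Order.TTheory GRing.Theory Num.Theory.
Import numFieldNormedType.Exports.
Local Open Scope ring_scope.
Local Open Scope classical_set_scope.
Local Open Scope sesquilinear_scope.

Section Defs.
Variable R : realType.
Local Notation C := (R[i]).

Definition reC (z : C) : R := complex.Re z.

Definition psdmx d (A : 'M[C]_d) : Prop :=
  A \is hermsymmx /\ forall v : 'rV[C]_d, 0 <= (v *m A *m v ^t*) 0 0.

Definition posdefmx d (A : 'M[C]_d) : Prop :=
  A \is hermsymmx /\ forall v : 'rV[C]_d, v != 0 -> 0 < (v *m A *m v ^t*) 0 0.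

Definition densities d : set 'M[C]_d :=
  [set X | psdmx X /\ \tr X = 1].

(* functional calculus: for A = U^-1 diag(lambda) U (U unitary, from the library's
   spectral decomposition of normal matrices), f(A) = U^-1 diag(f(lambda)) U,
   i.e. f(A) = sum_k f(lambda_k) v_k v_k^dagger. Eigenvalues of Hermitian
   matrices are real, so f is applied to their real part. *)
Definition mxfun d (f : R -> R) (A : 'M[C]_d) : 'M[C]_d :=
  invmx (spectralmx A)
    *m diag_mx (map_mx (fun z : C => ((f (reC z))%:C)%C) (spectral_diag A))
    *m spectralmx A.

(* regularizer h(X) = tr theta(X) (a real number since theta(X) is Hermitian) *)
Definition hreg d (theta : R -> R) (X : 'M[C]_d) : R := reC (\tr (mxfun theta X)).

Definition trdot d (Y X : 'M[C]_d) : R := reC (\tr (Y *m X)).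

(* convex conjugate h^*(Y) = max_{X in densities} (tr(YX) - h(X)); the maximum
   exists (continuous function on a compact set), so it equals the supremum *)
Definition hconj d (theta : R -> R) (Y : 'M[C]_d) : R :=
  sup [set trdot Y X - hreg theta X | X in @densities d].

Definition fenchel d (theta : R -> R) (P Y : 'M[C]_d) : R :=
  hreg theta P + hconj theta Y - trdot P Y.

Definition deriv_on_0_1 (f g : R -> R) : Prop :=
  forall x : R, 0 < x <= 1 ->
    (h^-1 * (f (x + h) - f x) @[h --> (0:R)^'-] --> g x) /\
    (x < 1 -> h^-1 * (f (x + h) - f x) @[h --> (0:R)^'+] --> g x).

(* standing assumptions on theta : [0,1] -> R (values outside [0,1] irrelevant) *)
Definition admissible_theta (theta : R -> R) : Prop :=
  {within `[0, 1], continuous theta} /\ theta 0 = 0 /\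
  exists theta1 theta2 : R -> R,
    deriv_on_0_1 theta theta1 /\ deriv_on_0_1 theta1 theta2 /\
    exists m : R, 0 < m /\ forall x : R, 0 < x <= 1 -> m <= theta2 x.

End Defs.
Arguments densities {R} d.

(* Fix n, diagonalise Z := Z_n = U^* diag(lam) U with U unitary and lam real,
   and let w_j := (U P U^* )_jj be the weights of P in the eigenbasis of Z.
   Then sum_j lam_j = tr Z = 0, sum_j w_j = tr P = 1, each w_j is at least the
   smallest eigenvalue p > 0 of P, and tr(P Z) = sum_j lam_j w_j.  Testing the
   supremum defining h^*(Z) at the pure state on a top eigenvector of Z gives
   h^*(Z) >= lam_max - d * max_[0,1] theta.  Hence the constant value c of the
   coupling yields
     sum_j w_j (lam_max - lam_j) = lam_max - tr(P Z) <= c - h(P) + d max theta,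
   a bound B independent of n, and the real-arithmetic lemma [spread_bound]
   turns it into |lam_k| <= B / p for every eigenvalue. *)
From HB Require Import structures.
From mathcomp Require Import all_boot all_order all_algebra.
From mathcomp Require Import sesquilinear spectral.
From mathcomp Require Import complex.
From mathcomp Require Import all_classical all_reals all_analysis.
From mathcomp Require Import lra.
Set Implicit Arguments. Unset Strict Implicit. Unset Printing Implicit Defensive.
Import Order.TTheory GRing.Theory Num.Theory.
Local Open Scope ring_scope.
Local Open Scope sesquilinear_scope.

Lemma spread_bound (R : realFieldType) n (lam w : 'I_n -> R) (i : 'I_n) (p B : R) :
  0 < p -> (forall j, p <= w j) -> \sum_j lam j = 0 ->
  (forall j, lam j <= lam i) -> \sum_j w j * (lam i - lam j) <= B ->
  forall k, `|lam k| <= B / p.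
Proof.
move=> p0 pw sum0 imax hB k.
have gap_le j : lam i - lam j <= B / p.
  rewrite ler_pdivlMr // mulrC; apply: le_trans hB.
  have gap0 l : 0 <= lam i - lam l by rewrite subr_ge0.
  rewrite (bigD1 j) //= (le_trans (ler_wpM2r (gap0 j) (pw j))) // lerDl.
  by apply: sumr_ge0 => l _; rewrite mulr_ge0 // (le_trans (ltW p0)).
have n0 : (0 < n)%N := leq_ltn_trans (leq0n i) (ltn_ord i).
have top0 : 0 <= lam i.
  have : \sum_j lam j <= \sum_(j < n) lam i by apply: ler_sum.
  by rewrite sum0 sumr_const card_ord -mulr_natl pmulr_rge0 // ltr0n.
have topB : lam i <= B / p.
  have : \sum_j (lam i - lam j) <= \sum_(j < n) B / p by apply: ler_sum.
  by rewrite sumrB sum0 subr0 !sumr_const card_ord ler_pMn2r.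
rewrite ler_norml (le_trans (imax k) topB) andbT lerNl.
by apply: le_trans (gap_le k); rewrite lerDr.
Qed.

Section Spectral.
Variable C : numClosedFieldType.

Lemma unitary_tK n (U : 'M[C]_n) : U \is unitarymx -> U^t* *m U = 1%:M.
Proof. by move=> Uu; rewrite -invmx_unitary // mulVmx // unitarymx_unit. Qed.

Lemma mxtrace_unitary_conj n (U M : 'M[C]_n) :
  U \is unitarymx -> \tr (U *m M *m U^t* ) = \tr M.
Proof. by move=> Uu; rewrite mxtrace_mulC mulmxA unitary_tK // mul1mx. Qed.

Lemma hermitian_spectral n (A : 'M[C]_n) : A \is hermsymmx ->
  A = (spectralmx A)^t* *m diag_mx (spectral_diag A) *m spectralmx A.
Proof.
move=> /hermitian_normalmx /orthomx_spectralP {1}->.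
by rewrite invmx_unitary // spectral_unitarymx.
Qed.

Lemma hermitian_diagonalize n (A : 'M[C]_n) : A \is hermsymmx ->
  spectralmx A *m A *m (spectralmx A)^t* = diag_mx (spectral_diag A).
Proof.
move=> hA; have /unitarymxP Uu := spectral_unitarymx A.
by rewrite {2}(hermitian_spectral hA) !mulmxA Uu mul1mx -mulmxA Uu mulmx1.
Qed.

Lemma conj_diag_entry n (U X : 'M[C]_n) k :
  (U *m X *m U^t* ) k k = (row k U *m X *m (row k U)^t* ) 0 0.
Proof.
rewrite !mxE; apply: eq_bigr => j _; rewrite !mxE; congr (_ * _).
by apply: eq_bigr => l _; rewrite !mxE.
Qed.

Lemma eigenvalue_spectral_diag n (A : 'M[C]_n) z :
  A \is hermsymmx -> eigenvalue A z -> exists k, z = spectral_diag A 0 k.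
Proof.
move=> hA /eigenvalueP [v hv nz].
set U := spectralmx A; set D := spectral_diag A.
have Uu : U \is unitarymx by exact: spectral_unitarymx.
set w := v *m U^t*.
have hw : w *m diag_mx D = z *: w.
  move: hv; rewrite {1}(hermitian_spectral hA) -/U -/D.
  by move/(congr1 (fun M => M *m U^t* )); rewrite !mulmxA mulmxtVK // -scalemxAl.
have [j wj] : exists j, w 0 j != 0.
  apply/existsP; apply: contraR nz => /existsPn w0.
  have -> : v = w *m U by rewrite mulmxKtV.
  suff -> : w = 0 by rewrite mul0mx.
  by apply/rowP => j; rewrite [in RHS]mxE; move: (w0 j); rewrite negbK => /eqP.
exists j; move/rowP: hw => /(_ j); rewrite mul_mx_diag [in LHS]mxE [in RHS]mxE => e.
by apply: (mulfI wj); rewrite mulrC -e.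
Qed.

End Spectral.

Section Densities.
Variable R : realType.
Local Notation C := (R[i]).

Lemma reC_sum n (f : 'I_n -> C) : reC (\sum_k f k) = \sum_k reC (f k).
Proof. by elim/big_rec2: _ => // k y z _ <-; case: (f k); case: z. Qed.

Lemma reC_mulr (x : R) (z : C) : reC ((x%:C)%C * z) = x * reC z.
Proof. by case: z => a b; rewrite /reC /= mul0r subr0. Qed.

Lemma reC_ge0 (z : C) : 0 <= z -> 0 <= reC z.
Proof. by rewrite lecE => /andP[]. Qed.

Lemma reC_le1 (z : C) : z <= 1 -> reC z <= 1.
Proof. by rewrite lecE => /andP[]. Qed.

Lemma spectral_diag_real n (Y : 'M[C]_n) k : Y \is hermsymmx ->
  ((reC (spectral_diag Y 0 k))%:C)%C = spectral_diag Y 0 k.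
Proof. by move=> hY; apply: RRe_real; exact: mxOverP (hermitian_spectral_diag_real hY) 0 k. Qed.

Lemma density_conj_diag n (U X : 'M[C]_n) : U \is unitarymx -> densities n X ->
  (forall k, 0 <= (U *m X *m U^t* ) k k <= 1) /\ \sum_k (U *m X *m U^t* ) k k = 1.
Proof.
move=> Uu [[_ Xpsd] trX].
have diag_ge0 k : 0 <= (U *m X *m U^t* ) k k by rewrite conj_diag_entry.
have sum1 : \sum_k (U *m X *m U^t* ) k k = 1 by rewrite -trX -(mxtrace_unitary_conj X Uu).
split=> // k; rewrite diag_ge0 -sum1 (bigD1 k) //= lerDl.
by apply: sumr_ge0 => j _.
Qed.

Lemma density_eigen n (X : 'M[C]_n) k : densities n X -> 0 <= reC (spectral_diag X 0 k) <= 1.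
Proof.
move=> hX; have [/(_ k) + _] := density_conj_diag (spectral_unitarymx X) hX.
rewrite hermitian_diagonalize; last by case: hX => -[].
by rewrite mxE eqxx mulr1n => /andP[/reC_ge0 -> /reC_le1].
Qed.

Lemma hreg_eigen n (theta : R -> R) (X : 'M[C]_n) :
  hreg theta X = \sum_k theta (reC (spectral_diag X 0 k)).
Proof.
rewrite /hreg /mxfun mxtrace_mulC mulmxA mulmxV ?spectral_unit // mul1mx.
by rewrite mxtrace_diag reC_sum; apply: eq_bigr => k _; rewrite mxE.
Qed.

Lemma hreg_bounds n (theta : R -> R) (mn mx : R) (X : 'M[C]_n) :
  (forall x, 0 <= x <= 1 -> mn <= theta x <= mx) -> densities n X ->
  n%:R * mn <= hreg theta X <= n%:R * mx.
Proof.
move=> hb hX; have const_sum c : \sum_(k < n) c = n%:R * c.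
  by rewrite sumr_const card_ord mulr_natl.
rewrite hreg_eigen -!const_sum; apply/andP; split; apply: ler_sum => k _;
  by have /andP[] := hb _ (density_eigen k hX).
Qed.

Lemma trdot_eigen n (Y X : 'M[C]_n) : Y \is hermsymmx ->
  trdot Y X = \sum_k reC (spectral_diag Y 0 k) *
      reC ((spectralmx Y *m X *m (spectralmx Y)^t* ) k k).
Proof.
move=> hY; set U := spectralmx Y; set M := U *m X *m U^t*.
have -> : trdot Y X = reC (\tr (diag_mx (spectral_diag Y) *m M)).
  by rewrite /trdot {1}(hermitian_spectral hY) -!mulmxA mxtrace_mulC !mulmxA.
rewrite mul_diag_mx /mxtrace reC_sum; apply: eq_bigr => k _.
by rewrite mxE -(spectral_diag_real k hY) reC_mulr.
Qed.

Lemma trdot_le n (Y X : 'M[C]_n) : Y \is hermsymmx -> densities n X ->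
  trdot Y X <= \sum_k `|reC (spectral_diag Y 0 k)|.
Proof.
move=> hY hX; rewrite trdot_eigen //; apply: ler_sum => k _.
have [/(_ k)/andP[/reC_ge0 w0 /reC_le1 w1] _] := density_conj_diag (spectral_unitarymx Y) hX.
by rewrite (le_trans (ler_wpM2r w0 (ler_norm _))) // -[leRHS]mulr1 ler_wpM2l.
Qed.

Lemma pure_state_density n (U : 'M[C]_n) k :
  U \is unitarymx -> densities n ((row k U)^t* *m row k U).
Proof.
move=> Uu; set u := row k U.
split; [split|].
- by apply/is_hermitianmxP; rewrite expr0 scale1r trmx_mul map_mxM trmxCK.
- move=> v; rewrite !mulmxA -(mulmxA (v *m u^t* )) [_ 0 0]mxE big_ord1.
  have -> : u *m v^t* = (v *m u^t* )^t* by rewrite trmx_mul map_mxM trmxCK.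
  by rewrite !mxE mul_conjC_ge0.
- by rewrite mxtrace_mulC /mxtrace big_ord1 -dotmxE (row_unitarymxP Uu) eqxx.
Qed.

Lemma trdot_pure_eigenstate n (Y : 'M[C]_n) k : Y \is hermsymmx ->
  trdot Y ((row k (spectralmx Y))^t* *m row k (spectralmx Y)) =
  reC (spectral_diag Y 0 k).
Proof.
move=> hY; rewrite /trdot mulmxA mxtrace_mulC mulmxA /mxtrace big_ord1.
by rewrite -conj_diag_entry hermitian_diagonalize // mxE eqxx mulr1n.
Qed.

(* h^*(Y) dominates tr(Y X) - h(X) at every density matrix X; the lower bound
   on theta makes the set in the supremum defining h^* bounded above. *)
Lemma hconj_ge n (theta : R -> R) (mn mx : R) (Y X : 'M[C]_n) :
  (forall x, 0 <= x <= 1 -> mn <= theta x <= mx) -> Y \is hermsymmx ->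
  densities n X -> trdot Y X - hreg theta X <= hconj theta Y.
Proof.
move=> hb hY hX; apply: ub_le_sup; last by exists X.
exists (\sum_k `|reC (spectral_diag Y 0 k)| - n%:R * mn) => _ [X' hX' <-].
by apply: lerB; [exact: trdot_le | have /andP[] := hreg_bounds hb hX'].
Qed.

Lemma hconj_ge_eigen n (theta : R -> R) (mn mx : R) (Y : 'M[C]_n) k :
  (forall x, 0 <= x <= 1 -> mn <= theta x <= mx) -> Y \is hermsymmx ->
  reC (spectral_diag Y 0 k) - n%:R * mx <= hconj theta Y.
Proof.
move=> hb hY; have Xk := pure_state_density k (spectral_unitarymx Y).
have /andP[_ hXk] := hreg_bounds hb Xk.
apply: le_trans (hconj_ge hb hY Xk).
by rewrite trdot_pure_eigenstate // lerB.
Qed.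

(* The diagonal of a positive definite matrix in any orthonormal basis is
   bounded below by its smallest eigenvalue p > 0. *)
Lemma posdef_diag_lb n (P : 'M[C]_n) : (0 < n)%N -> posdefmx P ->
  exists2 p, 0 < p & forall (U : 'M[C]_n) k, U \is unitarymx ->
    p <= reC ((U *m P *m U^t* ) k k).
Proof.
move=> n0 [hP Ppos]; set V := spectralmx P; set L := spectral_diag P.
have Vu : V \is unitarymx by exact: spectral_unitarymx.
have L0 j : 0 < reC (L 0 j).
  have : row j V != 0.
    apply/eqP => row0; have := (row_unitarymxP Vu) j j.
    by rewrite dotmxE row0 mul0mx mxE eqxx => /eqP; rewrite eq_sym oner_eq0.
  move/Ppos; rewrite -conj_diag_entry hermitian_diagonalize // mxE eqxx mulr1n.
  by rewrite ltcE => /andP[].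
pose j0 := [arg min_(j < Ordinal n0) reC (L 0 j)]%O.
have Lmin j : reC (L 0 j0) <= reC (L 0 j).
  by rewrite /j0; case: arg_minP => // i _ min_i; exact: min_i.
exists (reC (L 0 j0)) => // U k Uu.
rewrite conj_diag_entry; set a := row k U *m V^t*.
have -> : row k U *m P *m (row k U)^t* = a *m diag_mx L *m a^t*.
  by rewrite {1}(hermitian_spectral hP) /a trmx_mul map_mxM trmxCK !mulmxA.
have a1 : reC ((a *m a^t* ) 0 0) = 1.
  rewrite /a trmx_mul map_mxM trmxCK mulmxA -(mulmxA (row k U)) unitary_tK //.
  by rewrite mulmx1 -dotmxE (row_unitarymxP Uu) eqxx.
rewrite -[leLHS]mulr1 -a1 mul_mx_diag mxE [X in _ <= reC X]mxE !reC_sum mulr_sumr.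
apply: ler_sum => j _; rewrite !mxE -(spectral_diag_real j hP) -/L.
rewrite [X in _ <= reC X]mulrAC [X in _ <= reC X]mulrC reC_mulr mulrC.
by rewrite [leRHS]mulrC ler_wpM2l // reC_ge0 // mul_conjC_ge0.
Qed.

End Densities.

Lemma admissible_theta_bounded (R : realType) (theta : R -> R) :
  admissible_theta theta ->
  exists mn mx : R, forall x, 0 <= x <= 1 -> mn <= theta x <= mx.
Proof.
case=> cont _; have h01 : (0 : R) <= 1 by [].
have [xmx _ hmx] := EVT_max h01 cont; have [xmn _ hmn] := EVT_min h01 cont.
exists (theta xmn), (theta xmx) => x hx.
by rewrite hmx ?hmn // in_itv.
Qed.

Theorem lemmaE2 (R : realType) (d : nat) (theta : R -> R)
  (hd : (0 < d)%N) (htheta : admissible_theta theta)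
  (P : 'M[R[i]]_d) (hPX : densities d P) (hPpd : posdefmx P)
  (Z : nat -> 'M[R[i]]_d)
  (hZherm : forall n, Z n \is hermsymmx)
  (hZtr : forall n, \tr (Z n) = 0)
  (hF : forall n, fenchel theta P (Z n) = fenchel theta P (Z 0%N)) :
  exists M : R, forall (n : nat) (z : R[i]),
    eigenvalue (Z n) z -> `|z| <= (M%:C)%C.
Proof.
have [mn [mx hb]] := admissible_theta_bounded htheta.
have [p p0 hp] := posdef_diag_lb hd hPpd.
pose B := fenchel theta P (Z 0%N) - hreg theta P + d%:R * mx.
exists (B / p) => n z /(eigenvalue_spectral_diag (hZherm n)) [k ->].
set U := spectralmx (Z n); have Uu : U \is unitarymx := spectral_unitarymx _.
pose lam j := reC (spectral_diag (Z n) 0 j).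
pose w j := reC ((U *m P *m U^t* ) j j).
have sum_lam : \sum_j lam j = 0.
  by rewrite -reC_sum -mxtrace_diag -hermitian_diagonalize // mxtrace_unitary_conj ?hZtr.
have sum_w : \sum_j w j = 1 by rewrite -reC_sum (density_conj_diag Uu hPX).2.
pose i := [arg max_(j > k) lam j]%O.
have imax j : lam j <= lam i.
  by rewrite /i; case: arg_maxP => // i0 _ max_i0; exact: max_i0.
have gaps : \sum_j w j * (lam i - lam j) <= B.
  have -> : \sum_j w j * (lam i - lam j) = lam i - trdot (Z n) P.
    rewrite trdot_eigen // (eq_bigr (fun j => w j * lam i - lam j * w j)).
      by rewrite sumrB -mulr_suml sum_w mul1r.
    by move=> j _; rewrite mulrBr [w j * lam j]mulrC.
  have := hconj_ge_eigen i hb (hZherm n); have := hF n.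
  rewrite /B /fenchel /trdot mxtrace_mulC -/(trdot (Z n) P) -/(lam i); lra.
have := spread_bound p0 (fun j => hp U j Uu) sum_lam imax gaps k.
by rewrite -(spectral_diag_real k (hZherm n)) normc_def /= expr0n /= addr0 sqrtr_sqr lecR.
Qed.
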